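(* Let $N_0\ge 1$ be an integer, $\lambda>0$, and for each $i\in\mathbb{N}$ let $\alpha_i>0$, $\rho_i>0$, and let $\mu_i(j),\sigma_i(j)\in\mathbb{R}$ be given for $j\ge N_0\vee i$. Assume: (i) for each $i\in\mathbb{N}$, the sequences $\{\mu_i(j)\}_{j\ge N_0\vee i}$ and $\{\sigma_i(j)\}_{j\ge N_0\vee i}$ are bounded; (ii) there exist constants $0<\underline{\beta}\le\overline{\beta}$ with $\underline{\beta}\le\beta_i(j)\le\overline{\beta}$ for all $j\ge N_0$ and $1\le i\le j$, where $\beta_i(j)$ is defined in the context. Then there exist real numbers $\{A(j),k_i(j)\}_{j\ge N_0,\,1\le i\le j}$ satisfying, for every $j\ge N_0$ and $1\le i\le j$, $$\frac{1}{A(j)}=\beta_\Sigma(j)+\lambda-\Big(\alpha_\Sigma(j)\sum_{i=1}^j\frac{\lambda A(j+1)e^{-\alpha_i(k_i(j+1)-k_i(j))}}{\alpha_i}\Big)\frac{1}{A(j)},$$ $$k_i(j)=\frac{(\beta_i(j)+\lambda)A(j)-1}{\alpha_i}-\frac{\lambda A(j+1)e^{-\alpha_i(k_i(j+1)-k_i(j))}}{\alpha_i},$$ together with the bounds $$\frac{1}{\overline{\beta}+\lambda}<A(j)\le\frac{1}{\underline{\beta}},\qquad A(j)e^{-\alpha_ik_i(j)}\le\frac{1}{\underline{\beta}},\qquad -\ln\Big(\frac{\overline{\beta}+\lambda}{\underline{\beta}}\Big)\le\alpha_ik_i(j)\le\frac{\overline{\beta}+\lambda}{\underline{\beta}}-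1.$$
   Context: For $j\ge N_0$ and $1\le i\le j$ define $\alpha_\Sigma(j):=\big(\sum_{i=1}^j 1/\alpha_i\big)^{-1}$, $\beta_i(j):=\rho_i+\alpha_i\mu_i(j)-\tfrac12\alpha_i^2\sigma_i^2(j)$, $\beta_\Sigma(j):=\alpha_\Sigma(j)\sum_{i=1}^j \beta_i(j)/\alpha_i$. (Assumption (ii) implies $\underline{\beta}\le\beta_\Sigma(j)\le\overline{\beta}$.) *)

From Stdlib Require Import Reals Lra Lia.
Open Scope R_scope.

Fixpoint sum1 (f : nat -> R) (j : nat) : R :=
  match j with
  | O => 0
  | S j' => sum1 f j' + f (S j')
  end.

Definition alphaSigma (alpha : nat -> R) (j : nat) : R :=
  / sum1 (fun i => / alpha i) j.

Definition beta (alpha rho : nat -> R) (mu sigma : nat -> nat -> R)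
  (i j : nat) : R :=
  rho i + alpha i * mu i j - / 2 * (alpha i) ^ 2 * (sigma i j) ^ 2.

Definition betaSigma (alpha rho : nat -> R) (mu sigma : nat -> nat -> R)
  (j : nat) : R :=
  alphaSigma alpha j * sum1 (fun i => beta alpha rho mu sigma i j / alpha i) j.

(* Write x_i(j) = alpha_i k_i(j) and V_i = A(j+1) e^(-x_i(j+1)).  Level j of the system reads
     x_i + lambda V_i e^(x_i) = (beta_i(j) + lambda) A(j) - 1   and   sum_i x_i / alpha_i = 0,
   the second equation being a rearrangement of the one for 1/A(j).  When V_i <= 1/betaL, each x_i
   is an increasing continuous function of A(j), so the intermediate value theorem solves level j,
   and e^y >= 1 + y shows that the solution satisfies the bounds of the theorem, in particular
   A(j) e^(-x_i(j)) <= 1/betaL, which is what level j-1 needs.  Solving backwards from an arbitrary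
   terminal level T therefore gives solutions on every horizon [N0, T], all in one compact box of
   R^(N x N).  The sets of such solutions are closed and decrease with T, so by Tychonoff's theorem
   they have a common point, which solves every level. *)

From Stdlib Require Import Reals Lra Lia ClassicalEpsilon.
From mathcomp Require all_boot all_algebra all_classical all_analysis Rstruct Rstruct_topology.
Open Scope R_scope.

Lemma sum1_ext (f g : nat -> R) (n : nat) :
  (forall i, (1 <= i <= n)%nat -> f i = g i) -> sum1 f n = sum1 g n.
Proof.
induction n as [|n IH]; intros Hfg; simpl; [reflexivity|].
rewrite IH, (Hfg (S n)); [reflexivity | lia | intros; apply Hfg; lia].
Qed.

Lemma sum1_0 (n : nat) : sum1 (fun _ => 0) n = 0.
Proof. induction n as [|n IH]; simpl; [|rewrite IH]; ring. Qed.

Lemma sum1_plus (f g : nat -> R) (n : nat) :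
  sum1 (fun i => f i + g i) n = sum1 f n + sum1 g n.
Proof. induction n as [|n IH]; simpl; [|rewrite IH]; ring. Qed.

Lemma sum1_scal (c : R) (f : nat -> R) (n : nat) :
  sum1 (fun i => c * f i) n = c * sum1 f n.
Proof. induction n as [|n IH]; simpl; [|rewrite IH]; ring. Qed.

Lemma sum1_lt (f g : nat -> R) (n : nat) : (1 <= n)%nat ->
  (forall i, (1 <= i <= n)%nat -> f i < g i) -> sum1 f n < sum1 g n.
Proof.
induction n as [|n IH]; intros Hn Hfg; [lia|]. simpl.
assert (f (S n) < g (S n)) by (apply Hfg; lia).
destruct n as [|n]; [simpl; lra|].
assert (sum1 f (S n) < sum1 g (S n)) by (apply IH; [lia|intros; apply Hfg; lia]).
lra.
Qed.

Lemma sum1_continuity (f : nat -> R -> R) (n : nat) :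
  (forall i, (1 <= i <= n)%nat -> continuity (f i)) ->
  continuity (fun y => sum1 (fun i => f i y) n).
Proof.
induction n as [|n IH]; intros Hf; simpl.
- apply continuity_const. intros ?i ?Hi; reflexivity.
- apply (continuity_plus (fun y => sum1 (fun i => f i y) n) (f (S n))).
  + apply IH. intros; apply Hf; lia.
  + apply Hf; lia.
Qed.

Lemma exp_le_compat (x y : R) : x <= y -> exp x <= exp y.
Proof.
intros [Hlt | ->]; [apply Rlt_le, exp_increasing, Hlt | apply Rle_refl].
Qed.

(* For [c > 0], [x |-> x + c e^x] is an increasing bijection of [R]; [xexp_inv c] is
   its inverse (and an unspecified function when [c <= 0]). *)
Definition xexp_inv (c r : R) : R :=
  epsilon (inhabits 0) (fun x => x + c * exp x = r).

Lemma xexp_solvable (c r : R) : 0 < c -> exists x, x + c * exp x = r.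
Proof.
intros Hc.
set (f := fun x => x + c * exp x - r).
assert (Hf : continuity f) by (unfold f; reg).
assert (exp (r - c * exp r) < exp r) by (apply exp_increasing; pose proof (exp_pos r); nra).
destruct (IVT f (r - c * exp r) r Hf) as [x [_ Hx]].
- pose proof (exp_pos r); nra.
- unfold f; nra.
- unfold f; pose proof (exp_pos r); nra.
- exists x. unfold f in Hx. lra.
Qed.

Lemma xexp_inv_spec (c r : R) : 0 < c -> xexp_inv c r + c * exp (xexp_inv c r) = r.
Proof. intros Hc. unfold xexp_inv. apply epsilon_spec, xexp_solvable, Hc. Qed.

Lemma xexp_inv_1_lipschitz (c r s : R) : 0 < c ->
  Rabs (xexp_inv c r - xexp_inv c s) <= Rabs (r - s).
Proof.
intros Hc.
pose proof (xexp_inv_spec c r Hc) as Hr. pose proof (xexp_inv_spec c s Hc) as Hs.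
set (x := xexp_inv c r) in *. set (y := xexp_inv c s) in *.
destruct (Rle_lt_dec y x) as [Hyx|Hxy].
- assert (exp y <= exp x) by (apply exp_le_compat; exact Hyx).
  rewrite (Rabs_right (x - y)), Rabs_right by nra. nra.
- assert (exp x < exp y) by (apply exp_increasing; exact Hxy).
  rewrite (Rabs_left (x - y)), Rabs_left by nra. nra.
Qed.

Lemma xexp_inv_continuity (c : R) : 0 < c -> continuity (xexp_inv c).
Proof.
intros Hc r eps Heps. exists eps. split; [exact Heps|].
intros s [_ Hs]. simpl in *. unfold R_dist in *.
eapply Rle_lt_trans; [apply xexp_inv_1_lipschitz, Hc | exact Hs].
Qed.

Lemma xexp_inv_neg (c r : R) : 0 < c -> r < c -> xexp_inv c r < 0.
Proof.
intros Hc Hr. pose proof (xexp_inv_spec c r Hc) as Hx.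
pose proof (exp_ineq1_le (xexp_inv c r)). nra.
Qed.

Lemma xexp_inv_pos (c r : R) : 0 < c -> c < r -> 0 < xexp_inv c r.
Proof.
intros Hc Hr. pose proof (xexp_inv_spec c r Hc) as Hx.
apply Rnot_le_lt. intros Hle.
assert (exp (xexp_inv c r) <= 1) by (rewrite <- exp_0; apply exp_le_compat, Hle).
pose proof (exp_pos (xexp_inv c r)). nra.
Qed.

Definition level_eq (n : nat) (lam : R) (alpha b V : nat -> R) (A : R) (x : nat -> R) : Prop :=
  (forall i, (1 <= i <= n)%nat -> x i + lam * V i * exp (x i) = (b i + lam) * A - 1)
  /\ sum1 (fun i => x i / alpha i) n = 0.

Lemma level_eq_ext (n : nat) (lam : R) (alpha b V W : nat -> R) (A : R) (x y : nat -> R) :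
  (forall i, (1 <= i <= n)%nat -> V i = W i /\ x i = y i) ->
  level_eq n lam alpha b V A x -> level_eq n lam alpha b W A y.
Proof.
intros Hagree [Heq Hsum]. split.
- intros i Hi. destruct (Hagree i Hi) as [<- <-]. apply Heq, Hi.
- rewrite <- Hsum. apply sum1_ext. intros i Hi. destruct (Hagree i Hi) as [_ <-]. reflexivity.
Qed.

Section Level.

Variables (n : nat) (lam bL bU : R) (alpha b V : nat -> R).

Local Notation level_eq := (level_eq n lam alpha b V).

Hypothesis n_pos : (1 <= n)%nat.
Hypothesis lam_pos : 0 < lam.
Hypothesis bL_pos : 0 < bL.
Hypothesis alpha_pos : forall i, (1 <= i <= n)%nat -> 0 < alpha i.
Hypothesis b_bounds : forall i, (1 <= i <= n)%nat -> bL <= b i <= bU.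
Hypothesis V_pos : forall i, (1 <= i <= n)%nat -> 0 < V i.
Hypothesis V_le : forall i, (1 <= i <= n)%nat -> V i <= / bL.

Lemma bL_le_bU_from_b : bL <= bU.
Proof. destruct (b_bounds 1); [lia|lra]. Qed.

Lemma sum1_inv_alpha_pos : 0 < sum1 (fun i => / alpha i) n.
Proof.
rewrite <- (sum1_0 n). apply sum1_lt; [exact n_pos|].
intros i Hi. apply Rinv_0_lt_compat, alpha_pos, Hi.
Qed.

Lemma level_eq_solvable : exists A x, level_eq A x.
Proof.
set (h := fun i A => xexp_inv (lam * V i) ((b i + lam) * A - 1)).
set (F := fun A => sum1 (fun i => h i A / alpha i) n).
assert (Hc : forall i, (1 <= i <= n)%nat -> 0 < lam * V i).
{ intros i Hi. apply Rmult_lt_0_compat; [exact lam_pos | apply V_pos, Hi]. }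
assert (HF : continuity F).
{ apply sum1_continuity. intros i Hi. unfold h.
  apply continuity_mult; [|apply continuity_const; intros ?i ?Hi; reflexivity].
  apply (continuity_comp (fun A => (b i + lam) * A - 1)); [reg|].
  apply xexp_inv_continuity, Hc, Hi. }
set (Alo := / (bU + lam)).
set (Ahi := (2 + lam / bL) / bL).
pose proof bL_le_bU_from_b.
assert (Hlam_bL : 0 < lam / bL) by (apply Rdiv_lt_0_compat; assumption).
assert (HbAhi : bL * Ahi = 2 + lam / bL) by (unfold Ahi; field; lra).
assert (HAlo : F Alo < 0).
{ unfold F. rewrite <- (sum1_0 n). apply sum1_lt; [exact n_pos|]. intros i Hi.
  destruct (b_bounds i Hi).
  assert ((b i + lam) * Alo <= 1).
  { unfold Alo. rewrite <- (Rinv_r (bU + lam)) by lra.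
    apply Rmult_le_compat_r; [left; apply Rinv_0_lt_compat|]; lra. }
  assert (h i Alo < 0) by (apply xexp_inv_neg; [apply Hc, Hi | pose proof (Hc i Hi); lra]).
  pose proof (Rinv_0_lt_compat _ (alpha_pos i Hi)). unfold Rdiv. nra. }
assert (HAhi : 0 < F Ahi).
{ unfold F. rewrite <- (sum1_0 n). apply sum1_lt; [exact n_pos|]. intros i Hi.
  destruct (b_bounds i Hi).
  assert (lam * V i <= lam / bL) by (apply Rmult_le_compat_l; [lra | apply V_le, Hi]).
  assert (0 < Ahi) by (unfold Ahi; apply Rdiv_lt_0_compat; lra).
  assert (0 < h i Ahi) by (apply xexp_inv_pos; [apply Hc, Hi | nra]).
  pose proof (Rinv_0_lt_compat _ (alpha_pos i Hi)). unfold Rdiv. nra. }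
assert (Alo < Ahi).
{ apply Rle_lt_trans with (/ bL).
  - apply Rinv_le_contravar; lra.
  - apply Rmult_lt_reg_l with bL; [exact bL_pos|]. rewrite Rinv_r; lra. }
destruct (IVT F Alo Ahi HF) as [A [_ HFA]]; [assumption..|].
exists A, (fun i => h i A). split; [|exact HFA].
intros i Hi. apply xexp_inv_spec, Hc, Hi.
Qed.

Section Bounds.

Variables (A : R) (x : nat -> R).
Hypothesis Hsol : level_eq A x.

Lemma level_eq_x_lt i : (1 <= i <= n)%nat -> x i < (b i + lam) * A - 1.
Proof.
intros Hi. destruct Hsol as [Heq _]. rewrite <- (Heq i Hi).
pose proof (exp_pos (x i)). pose proof (V_pos i Hi). pose proof lam_pos.
assert (0 < lam * V i * exp (x i)) by (repeat apply Rmult_lt_0_compat; assumption).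
lra.
Qed.

(* If [e^(x_i) < bL A], then [V_i e^(x_i) < A] and the equation gives
   [x_i > bL A - 1 > e^(x_i) - 1], contradicting [e^y >= 1 + y]. *)
Lemma level_eq_Aexp_bounded i : (1 <= i <= n)%nat -> A * exp (- x i) <= / bL.
Proof.
intros Hi. destruct Hsol as [Heq _]. specialize (Heq i Hi).
destruct (b_bounds i Hi). pose proof (V_pos i Hi). pose proof (V_le i Hi).
pose proof (exp_pos (x i)). pose proof (exp_ineq1_le (x i)).
rewrite exp_Ropp. apply Rnot_lt_le. intros Hgt.
assert (Hlt : exp (x i) < bL * A).
{ apply Rmult_lt_reg_r with (/ bL * / exp (x i)).
  - apply Rmult_lt_0_compat; apply Rinv_0_lt_compat; assumption.
  - replace (exp (x i) * (/ bL * / exp (x i))) with (/ bL) by (field; lra).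
    replace (bL * A * (/ bL * / exp (x i))) with (A * / exp (x i)) by (field; lra).
    exact Hgt. }
assert (V i * bL <= 1).
{ apply Rmult_le_reg_r with (/ bL); [apply Rinv_0_lt_compat, bL_pos|].
  replace (V i * bL * / bL) with (V i) by (field; lra). lra. }
assert (V i * exp (x i) < A) by nra.
assert (lam * (V i * exp (x i)) < lam * A) by (apply Rmult_lt_compat_l; assumption).
assert (0 < A) by nra.
assert (bL * A <= b i * A) by (apply Rmult_le_compat_r; lra).
lra.
Qed.

Lemma level_eq_A_pos : 0 < A.
Proof.
apply Rnot_le_lt. intros HA.
assert (Hneg : sum1 (fun i => x i / alpha i) n < sum1 (fun _ => 0) n).
{ apply sum1_lt; [exact n_pos|]. intros i Hi.
  pose proof (level_eq_x_lt i Hi). destruct (b_bounds i Hi).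
  assert (0 <= (b i + lam) * - A) by (apply Rmult_le_pos; lra).
  pose proof (Rinv_0_lt_compat _ (alpha_pos i Hi)). unfold Rdiv. nra. }
rewrite (proj2 Hsol), sum1_0 in Hneg. lra.
Qed.

Lemma level_eq_A_gt : / (bU + lam) < A.
Proof.
pose proof bL_le_bU_from_b. pose proof sum1_inv_alpha_pos. pose proof level_eq_A_pos.
assert (Hsum : 0 < ((bU + lam) * A - 1) * sum1 (fun i => / alpha i) n).
{ rewrite <- sum1_scal, <- (proj2 Hsol). apply sum1_lt; [exact n_pos|].
  intros i Hi. pose proof (level_eq_x_lt i Hi). destruct (b_bounds i Hi).
  pose proof (Rinv_0_lt_compat _ (alpha_pos i Hi)).
  unfold Rdiv. apply Rmult_lt_compat_r; [assumption|]. nra. }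
assert (1 < (bU + lam) * A) by nra.
apply Rmult_lt_reg_l with (bU + lam); [lra|]. rewrite Rinv_r; lra.
Qed.

Lemma level_eq_A_le : A <= / bL.
Proof.
apply Rnot_lt_le. intros Hgt. pose proof level_eq_A_pos.
assert (Hpos : sum1 (fun _ => 0) n < sum1 (fun i => x i / alpha i) n).
{ apply sum1_lt; [exact n_pos|]. intros i Hi. apply Rdiv_lt_0_compat; [|apply alpha_pos, Hi].
  assert (Hexp : exp (- x i) < exp 0).
  { rewrite exp_0. apply Rmult_lt_reg_l with A; [lra|].
    pose proof (level_eq_Aexp_bounded i Hi). lra. }
  apply exp_lt_inv in Hexp. lra. }
rewrite (proj2 Hsol), sum1_0 in Hpos. lra.
Qed.

Lemma level_eq_x_ge i : (1 <= i <= n)%nat -> - ln ((bU + lam) / bL) <= x i.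
Proof.
intros Hi. pose proof level_eq_A_gt. pose proof level_eq_A_pos. pose proof bL_le_bU_from_b.
pose proof (level_eq_Aexp_bounded i Hi). pose proof (exp_pos (- x i)).
assert (1 < A * (bU + lam)).
{ apply Rmult_lt_reg_r with (/ (bU + lam)); [apply Rinv_0_lt_compat; lra|].
  rewrite Rmult_assoc, Rinv_r, Rmult_1_l, Rmult_1_r by lra. assumption. }
assert (Hlt : exp (- x i) < (bU + lam) / bL).
{ assert (exp (- x i) * A * (bU + lam) <= / bL * (bU + lam))
    by (apply Rmult_le_compat_r; lra).
  unfold Rdiv. nra. }
apply ln_increasing in Hlt; [|assumption]. rewrite ln_exp in Hlt. lra.
Qed.

Lemma level_eq_x_le i : (1 <= i <= n)%nat -> x i <= (bU + lam) / bL - 1.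
Proof.
intros Hi. pose proof (level_eq_x_lt i Hi). destruct (b_bounds i Hi).
pose proof level_eq_A_pos. pose proof level_eq_A_le.
assert ((b i + lam) * A <= (bU + lam) * / bL) by (apply Rmult_le_compat; lra).
unfold Rdiv. lra.
Qed.

Lemma level_eq_bounds :
  (/ (bU + lam) < A <= / bL)
  /\ forall i, (1 <= i <= n)%nat ->
       A * exp (- x i) <= / bL
       /\ - ln ((bU + lam) / bL) <= x i <= (bU + lam) / bL - 1.
Proof.
split; [split; [exact level_eq_A_gt | exact level_eq_A_le]|].
intros i Hi. split; [|split].
- apply level_eq_Aexp_bounded, Hi.
- apply level_eq_x_ge, Hi.
- apply level_eq_x_le, Hi.
Qed.

Lemma level_eq_inv_A :
  / A = alphaSigma alpha n * sum1 (fun i => b i / alpha i) n + lam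
        - alphaSigma alpha n * sum1 (fun i => lam * V i * exp (x i) / alpha i) n * / A.
Proof.
pose proof sum1_inv_alpha_pos. pose proof level_eq_A_pos.
destruct Hsol as [Heq Hsum].
assert (Hid : sum1 (fun i => x i / alpha i) n =
   A * sum1 (fun i => b i / alpha i) n + (lam * A - 1) * sum1 (fun i => / alpha i) n
   + -1 * sum1 (fun i => lam * V i * exp (x i) / alpha i) n).
{ rewrite <- !sum1_scal, <- !sum1_plus. apply sum1_ext. intros i Hi.
  pose proof (alpha_pos i Hi).
  replace (x i) with ((b i + lam) * A - 1 - lam * V i * exp (x i)) at 1 by (rewrite <- (Heq i Hi); ring).
  field. lra. }
unfold alphaSigma. rewrite Hsum in Hid. field_simplify_eq; [|lra..]. lra.
Qed.

End Bounds.

End Level.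

Lemma exp_scaled_diff (a y x : R) : a <> 0 -> exp (- a * (y / a - x / a)) = exp (- y) * exp x.
Proof. intros Ha. rewrite <- exp_plus. f_equal. field. exact Ha. Qed.

Section Trajectory.

Variables (N0 : nat) (lam bL bU : R) (alpha : nat -> R) (b : nat -> nat -> R).

(* A trajectory [p] stores [A(j)] at [(0, j)] and [x_i(j) = alpha_i k_i(j)] at [(i, j)]. *)
Definition Aexp_bounded (p : nat * nat -> R) (j : nat) : Prop :=
  forall i, (1 <= i <= j)%nat -> p (0%nat, j) * exp (- p (i, j)) <= / bL.

Definition level_eq_at (p : nat * nat -> R) (j : nat) : Prop :=
  level_eq j lam alpha (fun i => b i j) (fun i => p (0%nat, S j) * exp (- p (i, S j)))
    (p (0%nat, j)) (fun i => p (i, j)).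

Definition level_solved (p : nat * nat -> R) (j : nat) : Prop :=
  level_eq_at p j /\ Aexp_bounded p j.

Definition horizon_solved (T : nat) (p : nat * nat -> R) : Prop :=
  forall j, (N0 <= j <= T)%nat -> level_solved p j.

Lemma horizon_solved_S (T : nat) (p : nat * nat -> R) :
  horizon_solved (S T) p -> horizon_solved T p.
Proof. intros Hp j Hj. apply Hp. lia. Qed.

Definition box_lo (c : nat * nat) : R :=
  match fst c with O => / (bU + lam) | S _ => - ((bU + lam) / bL) end.

Definition box_hi (c : nat * nat) : R :=
  match fst c with O => / bL | S _ => (bU + lam) / bL end.

Definition in_box (p : nat * nat -> R) : Prop := forall c, box_lo c <= p c <= box_hi c.

Hypothesis N0_pos : (1 <= N0)%nat.
Hypothesis lam_pos : 0 < lam.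
Hypothesis bL_pos : 0 < bL.
Hypothesis bL_le_bU : bL <= bU.
Hypothesis alpha_pos : forall i, (1 <= i)%nat -> 0 < alpha i.
Hypothesis b_bounds : forall i j, (N0 <= j)%nat -> (1 <= i <= j)%nat -> bL <= b i j <= bU.

Lemma in_box_A_pos (p : nat * nat -> R) (j : nat) : in_box p -> 0 < p (0%nat, j).
Proof.
intros Hbox. destruct (Hbox (0%nat, j)) as [Hlo _]. unfold box_lo in Hlo. simpl in Hlo.
assert (0 < / (bU + lam)) by (apply Rinv_0_lt_compat; lra). lra.
Qed.

Local Ltac level_hypotheses :=
  first [ lia | exact lam_pos | exact bL_pos
        | intros ?i ?Hi; apply alpha_pos; lia
        | intros ?i ?Hi; apply b_bounds; lia
        | intros ?i ?Hi; apply Rmult_lt_0_compat; [assumption | apply exp_pos]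
        | intros ?i ?Hi; match goal with H : Aexp_bounded _ _ |- _ => apply H; lia end ].

Lemma level_eq_at_bounds (p : nat * nat -> R) (j : nat) :
  (N0 <= j)%nat -> 0 < p (0%nat, S j) -> Aexp_bounded p (S j) -> level_eq_at p j ->
  (/ (bU + lam) < p (0%nat, j) <= / bL)
  /\ forall i, (1 <= i <= j)%nat ->
       p (0%nat, j) * exp (- p (i, j)) <= / bL
       /\ - ln ((bU + lam) / bL) <= p (i, j) <= (bU + lam) / bL - 1.
Proof.
intros Hj HAnext Hnext Hsol.
revert Hsol. apply level_eq_bounds; level_hypotheses.
Qed.

Lemma level_eq_at_inv_A (p : nat * nat -> R) (j : nat) :
  (N0 <= j)%nat -> 0 < p (0%nat, S j) -> level_eq_at p j ->
  / p (0%nat, j) =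
    alphaSigma alpha j * sum1 (fun i => b i j / alpha i) j + lam
    - alphaSigma alpha j
      * sum1 (fun i => lam * p (0%nat, S j)
                       * exp (- alpha i * (p (i, S j) / alpha i - p (i, j) / alpha i)) / alpha i) j
      * / p (0%nat, j).
Proof.
intros Hj HAnext Hsol.
assert (Hsum : sum1 (fun i => lam * p (0%nat, S j)
                 * exp (- alpha i * (p (i, S j) / alpha i - p (i, j) / alpha i)) / alpha i) j
               = sum1 (fun i => lam * (p (0%nat, S j) * exp (- p (i, S j))) * exp (p (i, j))
                 / alpha i) j).
{ apply sum1_ext. intros i Hi. assert (0 < alpha i) by (apply alpha_pos; lia).
  rewrite exp_scaled_diff by lra. unfold Rdiv. ring. }
rewrite Hsum. revert Hsol. apply (level_eq_inv_A j lam bL bU); level_hypotheses.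
Qed.

Lemma level_eq_at_k (p : nat * nat -> R) (i j : nat) :
  (1 <= i <= j)%nat -> level_eq_at p j ->
  p (i, j) / alpha i =
    ((b i j + lam) * p (0%nat, j) - 1) / alpha i
    - lam * p (0%nat, S j) * exp (- alpha i * (p (i, S j) / alpha i - p (i, j) / alpha i)) / alpha i.
Proof.
intros Hi [Heq _]. specialize (Heq i Hi). simpl in Heq.
assert (0 < alpha i) by (apply alpha_pos, Hi).
rewrite exp_scaled_diff, <- Heq by lra. field. lra.
Qed.

Definition set_column (p : nat * nat -> R) (j : nat) (A : R) (x : nat -> R) : nat * nat -> R :=
  fun c => if (Nat.eqb (snd c) j && Nat.leb (fst c) j)%bool
           then match fst c with O => A | S i => x (S i) end
           else p c.

Lemma set_column_A p j A x : set_column p j A x (0%nat, j) = A.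
Proof. unfold set_column. simpl. rewrite Nat.eqb_refl. reflexivity. Qed.

Lemma set_column_x p j A x i : (1 <= i <= j)%nat -> set_column p j A x (i, j) = x i.
Proof.
intros Hi. unfold set_column. simpl. rewrite Nat.eqb_refl.
destruct (Nat.leb_spec i j); [|lia]. destruct i; [lia | reflexivity].
Qed.

Lemma set_column_other p j A x i k :
  (k <> j \/ j < i)%nat -> set_column p j A x (i, k) = p (i, k).
Proof.
intros Hik. unfold set_column. simpl.
destruct (Nat.eqb_spec k j), (Nat.leb_spec i j); simpl; [lia | reflexivity ..].
Qed.

Lemma level_solved_ext (p q : nat * nat -> R) (j : nat) :
  (forall i, (i <= j)%nat -> q (i, j) = p (i, j) /\ q (i, S j) = p (i, S j)) ->
  level_solved p j -> level_solved q j.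
Proof.
intros Hpq [Hsol Hbound].
destruct (Hpq 0%nat) as [HA HA']; [lia|].
split.
- unfold level_eq_at. rewrite HA. revert Hsol. apply level_eq_ext. intros i Hi.
  destruct (Hpq i) as [-> ->]; [lia|]. rewrite HA'. split; reflexivity.
- intros i Hi. rewrite HA. destruct (Hpq i) as [-> _]; [lia|]. apply Hbound, Hi.
Qed.

Definition tail_solved (T m : nat) (p : nat * nat -> R) : Prop :=
  in_box p /\ (forall j, (m <= j <= T)%nat -> level_solved p j) /\ Aexp_bounded p m.

Lemma tail_solved_terminal (T : nat) : exists p, tail_solved T (S T) p.
Proof.
exists (fun c => match fst c with O => / bL | S _ => 0 end).
assert (0 < (bU + lam) / bL) by (apply Rdiv_lt_0_compat; lra).
split; [|split].
- intros [[|i] k]; unfold box_lo, box_hi; simpl; [|lra].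
  split; [apply Rinv_le_contravar|]; lra.
- intros j Hj. lia.
- intros i Hi. simpl. destruct i; [lia|]. rewrite Ropp_0, exp_0. lra.
Qed.

Lemma ln_le_self_minus_1 (y : R) : 0 < y -> ln y <= y - 1.
Proof. intros Hy. pose proof (exp_ineq1_le (ln y)). rewrite exp_ln in H by exact Hy. lra. Qed.

Lemma tail_solved_step (T m : nat) :
  (N0 <= m <= T)%nat -> (exists p, tail_solved T (S m) p) -> exists p, tail_solved T m p.
Proof.
intros Hm [p [Hbox [Hsolved Hnext]]].
pose proof (in_box_A_pos p (S m) Hbox) as HAnext.
destruct (level_eq_solvable m lam bL bU alpha (fun i => b i m)
            (fun i => p (0%nat, S m) * exp (- p (i, S m)))) as [A [x Hsol]];
  [level_hypotheses ..|].
set (q := set_column p m A x).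
assert (Hq_next : forall i, q (i, S m) = p (i, S m)) by (intros i; apply set_column_other; lia).
assert (Heq_q : level_eq_at q m).
{ unfold level_eq_at, q. rewrite set_column_A. revert Hsol. apply level_eq_ext. intros i Hi.
  rewrite set_column_x, !set_column_other by lia. split; reflexivity. }
destruct (level_eq_at_bounds q m) as [HA Hx];
  [lia | rewrite Hq_next; exact HAnext | intros i Hi; rewrite !Hq_next; apply Hnext, Hi | exact Heq_q |].
exists q. split; [|split].
- intros [i k]. destruct (Nat.eq_dec k m) as [->|Hk]; [destruct (Nat.le_gt_cases i m) as [Him|Him]|].
  + unfold box_lo, box_hi. simpl. destruct i as [|i].
    * split; [apply Rlt_le|]; apply HA.
    * destruct (Hx (S i)) as [_ [Hlo Hhi]]; [lia|].
      pose proof (ln_le_self_minus_1 ((bU + lam) / bL)).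
      assert (0 < (bU + lam) / bL) by (apply Rdiv_lt_0_compat; lra).
      split; lra.
  + unfold q. rewrite set_column_other by lia. apply Hbox.
  + unfold q. rewrite set_column_other by lia. apply Hbox.
- intros j Hj. destruct (Nat.eq_dec j m) as [->|Hjm].
  + split; [exact Heq_q|]. intros i Hi. apply Hx, Hi.
  + apply (level_solved_ext p); [|apply Hsolved; lia].
    intros i Hi. unfold q. rewrite !set_column_other by lia. split; reflexivity.
- intros i Hi. apply Hx, Hi.
Qed.

Lemma horizon_solvable (T : nat) : exists p, in_box p /\ horizon_solved T p.
Proof.
destruct (Nat.le_gt_cases N0 (S T)) as [HT|HT].
- assert (Htail : forall d m, (m + d = S T)%nat -> (N0 <= m)%nat -> exists p, tail_solved T m p).
  { induction d as [|d IH]; intros m Hmd Hm.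
    - replace m with (S T) by lia. apply tail_solved_terminal.
    - apply tail_solved_step; [lia|]. apply IH; lia. }
  destruct (Htail (S T - N0)%nat N0) as [p [Hbox [Hsolved _]]]; [lia | lia |].
  exists p. split; assumption.
- destruct (tail_solved_terminal T) as [p [Hbox _]].
  exists p. split; [assumption | intros j Hj; lia].
Qed.

End Trajectory.

Module HorizonLimit.

Import all_boot all_algebra all_classical all_analysis Rstruct Rstruct_topology.
Local Open Scope classical_set_scope.
Local Open Scope ring_scope.

Lemma compact_nested_closed_meet {T : topologicalType} {K : set T} {F : nat -> set T} :
  compact K -> (forall n, closed (F n)) -> (forall n, F n.+1 `<=` F n) ->
  (forall n, K `&` F n !=set0) -> K `&` \bigcap_n F n !=set0.
Proof.
move=> cK cF Fdec KF.
have Fmono m n : (m <= n)%N -> F n `<=` F m.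
  elim: n => [|n IH]; first by rewrite leqn0 => /eqP ->.
  rewrite leq_eqVlt ltnS => /orP[/eqP -> //|/IH FnFm].
  exact: subset_trans (Fdec n) FnFm.
pose G := filter_from [set: nat] (fun n => K `&` F n).
have PG : ProperFilter G.
  apply: filter_from_proper => [|n _]; last exact: KF.
  apply: filter_from_filter => [|m n _ _]; first by exists 0%N.
  exists (maxn m n) => // x [Kx Fx].
  by split; split=> //; apply: Fmono Fx; rewrite ?leq_maxl ?leq_maxr.
have [|p [Kp Gp]] := cK G PG; first by exists 0%N => // x [].
exists p; split=> // n _; apply: cF => B Bp.
have GFn : G (K `&` F n) by exists n.
by have [x [[_ Fx] Bx]] := Gp _ _ GFn Bp; exists x.
Qed.

Section functionals.
Context {I : eqType}.
Implicit Types f g : {ptws I -> R} -> R.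

Lemma coord_continuous (c : I) : continuous (fun p : {ptws I -> R} => p c).
Proof. exact: (@proj_continuous I (fun _ => R) c). Qed.

Lemma const_continuous (a : R) : continuous (fun _ : {ptws I -> R} => a).
Proof. exact: cst_continuous. Qed.

Lemma Rplus_continuous f g : continuous f -> continuous g -> continuous (fun p => Rplus (f p) (g p)).
Proof. by move=> cf cg p; apply: (@continuousD _ R^o _ f g p (cf p) (cg p)). Qed.

Lemma Rmult_continuous f g : continuous f -> continuous g -> continuous (fun p => Rmult (f p) (g p)).
Proof. by move=> cf cg p; apply: (@continuousM R _ f g p (cf p) (cg p)). Qed.

Lemma Ropp_continuous f : continuous f -> continuous (fun p => Ropp (f p)).
Proof. by move=> cf p; apply: (@continuousN _ R^o _ f p (cf p)). Qed.

Lemma exp_continuous f : continuous f -> continuous (fun p => exp (f p)).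
Proof.
move=> cf p; apply: continuous_comp; first exact: cf.
by apply/continuity_pt_cvg; apply: derivable_continuous_pt; apply: derivable_pt_exp.
Qed.

Lemma sum1_continuous (F : nat -> {ptws I -> R} -> R) (n : nat) :
  (forall i, continuous (F i)) -> continuous (fun p => sum1 (fun i => F i p) n).
Proof.
move=> cF; elim: n => [|n IH]; first exact: const_continuous.
exact: (Rplus_continuous (fun p => sum1 (fun i => F i p) n) (F n.+1)).
Qed.

Lemma closed_eq_continuous f g : continuous f -> continuous g -> closed [set p | f p = g p].
Proof.
move=> cf cg.
have -> : [set p | f p = g p] = (fun p => Rplus (f p) (Ropp (g p))) @^-1` [set 0].
  apply/seteqP; split => p /=; first by move=> ->; rewrite Rplus_opp_r.
  by move/Rplus_opp_r_uniq/Ropp_eq_compat; rewrite !Ropp_involutive.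
apply: preimage_closed; last exact: closed_eq.
by move=> p _; apply: (Rplus_continuous _ _ cf (Ropp_continuous _ cg)).
Qed.

Lemma closed_Rle_continuous f (a : R) : continuous f -> closed [set p | Rle (f p) a].
Proof.
move=> cf.
have -> : [set p | Rle (f p) a] = f @^-1` [set y | y <= a].
  by apply/seteqP; split => p /= /RleP.
by apply: preimage_closed; [move=> p _; exact: cf | exact: closed_le].
Qed.

Lemma closed_forall (K : Type) (D : K -> Prop) (P : K -> set {ptws I -> R}) :
  (forall k, D k -> closed (P k)) -> closed [set p | forall k, D k -> P k p].
Proof.
move=> cP.
have -> : [set p | forall k, D k -> P k p] = \bigcap_(k in D) P k by [].
exact: closed_bigI.
Qed.

End functionals.

Lemma horizon_solved_closed (N0 : nat) (lam bL : R) (alpha : nat -> R) (b : nat -> nat -> R)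
  (T : nat) : closed [set p : {ptws nat * nat -> R} | horizon_solved N0 lam bL alpha b T p].
Proof.
apply: closed_forall => j _.
rewrite /level_solved /level_eq_at /level_eq /Aexp_bounded.
apply: closedI; [apply: closedI|].
- apply: closed_forall => i _; apply: closed_eq_continuous.
  + apply: Rplus_continuous; first exact: coord_continuous.
    apply: Rmult_continuous; last exact/exp_continuous/coord_continuous.
    apply: Rmult_continuous; first exact: const_continuous.
    apply: Rmult_continuous; first exact: coord_continuous.
    exact/exp_continuous/Ropp_continuous/coord_continuous.
  + apply: Rplus_continuous; last exact: const_continuous.
    by apply: Rmult_continuous; [exact: const_continuous | exact: coord_continuous].
- apply: closed_eq_continuous; last exact: const_continuous.
  apply: sum1_continuous => i.
  by apply: Rmult_continuous; [exact: coord_continuous | exact: const_continuous].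
- apply: closed_forall => i _; apply: closed_Rle_continuous.
  apply: Rmult_continuous; first exact: coord_continuous.
  exact/exp_continuous/Ropp_continuous/coord_continuous.
Qed.

Lemma in_box_compact (lam bL bU : R) : compact [set p : {ptws nat * nat -> R} | in_box lam bL bU p].
Proof.
have -> : [set p : {ptws nat * nat -> R} | in_box lam bL bU p] =
          [set p : {ptws nat * nat -> R} | forall c, `[box_lo lam bL bU c, box_hi lam bL bU c]%classic (p c)].
  apply/seteqP; split => p /= Hp c; have := Hp c; rewrite /= in_itv /=.
    by move=> [/RleP -> /RleP ->].
  by move=> /andP[/RleP ? /RleP ?].
apply: (@tychonoff _ (fun _ => R) (fun c => `[box_lo lam bL bU c, box_hi lam bL bU c]%classic)).
by move=> c; exact: segment_compact.
Qed.

Lemma horizon_limit (N0 : nat) (lam bL bU : R) (alpha : nat -> R) (b : nat -> nat -> R) :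
  (forall T, exists p, in_box lam bL bU p /\ horizon_solved N0 lam bL alpha b T p) ->
  exists p, in_box lam bL bU p /\ forall T, horizon_solved N0 lam bL alpha b T p.
Proof.
move=> solvable.
have [|p [Hbox Hall]] := compact_nested_closed_meet (in_box_compact lam bL bU)
  (horizon_solved_closed N0 lam bL alpha b) (@horizon_solved_S N0 lam bL alpha b).
  by move=> T; have [p Hp] := solvable T; exists p.
by exists p; split=> // T; apply: Hall.
Qed.

End HorizonLimit.

Theorem theorem3p2
  (N0 : nat) (lambda : R)
  (alpha rho : nat -> R) (mu sigma : nat -> nat -> R)
  (betaL betaU : R) :
  (1 <= N0)%nat ->
  0 < lambda ->
  (forall i : nat, (1 <= i)%nat -> 0 < alpha i) ->
  (forall i : nat, (1 <= i)%nat -> 0 < rho i) ->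
  (* (i) boundedness of mu_i(.) and sigma_i(.) on j >= N0 \/ i *)
  (forall i : nat, (1 <= i)%nat ->
     (exists M : R, forall j : nat, (Nat.max N0 i <= j)%nat -> Rabs (mu i j) <= M) /\
     (exists M : R, forall j : nat, (Nat.max N0 i <= j)%nat -> Rabs (sigma i j) <= M)) ->
  (* (ii) *)
  0 < betaL -> betaL <= betaU ->
  (forall i j : nat, (N0 <= j)%nat -> (1 <= i <= j)%nat ->
     betaL <= beta alpha rho mu sigma i j <= betaU) ->
  exists (A : nat -> R) (k : nat -> nat -> R),
    forall j : nat, (N0 <= j)%nat ->
      / A j =
        betaSigma alpha rho mu sigma j + lambda
        - (alphaSigma alpha j *
           sum1 (fun i => lambda * A (S j) * exp (- alpha i * (k i (S j) - k i j)) / alpha i) j)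
          * / A j
      /\ / (betaU + lambda) < A j <= / betaL
      /\ forall i : nat, (1 <= i <= j)%nat ->
           k i j = ((beta alpha rho mu sigma i j + lambda) * A j - 1) / alpha i
                   - lambda * A (S j) * exp (- alpha i * (k i (S j) - k i j)) / alpha i
           /\ A j * exp (- alpha i * k i j) <= / betaL
           /\ - ln ((betaU + lambda) / betaL) <= alpha i * k i j
           /\ alpha i * k i j <= (betaU + lambda) / betaL - 1.
Proof.
intros HN0 Hlam Halpha _ _ HbL HbLU Hbeta.
set (b := beta alpha rho mu sigma).
destruct (HorizonLimit.horizon_limit N0 lambda betaL betaU alpha b
            (horizon_solvable N0 lambda betaL betaU alpha b HN0 Hlam HbL HbLU Halpha Hbeta))
  as [p [Hbox Hsolved]].
exists (fun j => p (0%nat, j)), (fun i j => p (i, j) / alpha i).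
intros j Hj. cbv beta.
destruct (Hsolved j j) as [Hlevel _]; [lia|].
destruct (Hsolved (S j) (S j)) as [_ Hnext]; [lia|].
assert (HAnext : 0 < p (0%nat, S j)) by (apply (in_box_A_pos lambda betaL betaU); assumption).
destruct (level_eq_at_bounds N0 lambda betaL betaU alpha b HN0 Hlam HbL Halpha Hbeta p j
            Hj HAnext Hnext Hlevel) as [HA Hx].
split; [|split; [exact HA|]].
- unfold betaSigma. apply (level_eq_at_inv_A N0 lambda betaL betaU); assumption.
- intros i Hi.
  assert (Hk : alpha i * (p (i, j) / alpha i) = p (i, j)) by (field; apply Rgt_not_eq, Halpha; lia).
  split; [apply (level_eq_at_k lambda alpha b Halpha); assumption|].
  rewrite <- Ropp_mult_distr_l, Hk. apply Hx, Hi.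
Qed.
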